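(* There is an absolute constant $C>0$ such that the following holds. Let $n\ge1$, $K\ge1$, and let $X_1,\dots,X_n$ be i.i.d. random variables with $0\le X_j\le Kn$ almost surely and $\mathbb{E}X_j\le 1$. Let $\varepsilon\in(0,1/2)$. Then there exist random variables $W_1,\dots,W_n$ taking values in $[0,1]$, defined on a common probability space with $X_1,\dots,X_n$ (possibly after enlarging the probability space), such that $$\sum_{j=1}^n W_jX_j\le CK\log(\varepsilon^{-1})\, n\quad\text{almost surely}$$ and $$1\le \mathbb{E}\Big(\prod_{j=1}^n W_j\Big)^{-1}\le 1+\varepsilon.$$ *)

From HB Require Import structures.
From mathcomp Require Import all_boot all_order all_algebra.
From mathcomp Require Import all_classical all_reals all_analysis.
Set Implicit Arguments. Unset Strict Implicit. Unset Printing Implicit Defensive.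
Import Order.TTheory GRing.Theory Num.Theory.
Local Open Scope classical_set_scope.
Local Open Scope ring_scope.

Definition mutually_independent d (T : measurableType d) (R : realType)
  (P : probability T R) (n : nat) (X : 'I_n -> T -> R) : Prop :=
  (forall j, measurable_fun setT (X j)) /\
  (forall B : 'I_n -> set R, (forall j, measurable (B j)) ->
     P (\bigcap_(j in [set: 'I_n]) (X j @^-1` B j)) =
     (\prod_(j < n) P (X j @^-1` B j))%E).

Definition identically_distributed d (T : measurableType d) (R : realType)
  (P : probability T R) (n : nat) (X : 'I_n -> T -> R) : Prop :=
  forall (i j : 'I_n) (B : set R), measurable B ->
    P (X i @^-1` B) = P (X j @^-1` B).

Definition iid d (T : measurableType d) (R : realType)
  (P : probability T R) (n : nat) (X : 'I_n -> T -> R) : Prop :=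
  mutually_independent P X /\ identically_distributed P X.

Definition inv_prod (T : Type) (R : realType) (n : nat) (W : 'I_n -> T -> R)
  (x : T) : \bar R :=
  let p := \prod_(j < n) W j x in
  if p == 0 then +oo%E else (p^-1)%:E.

From HB Require Import structures.
From mathcomp Require Import all_boot all_order all_algebra.
From mathcomp Require Import all_classical all_reals all_analysis.
From mathcomp Require Import measurable_realfun ring lra.
Set Implicit Arguments. Unset Strict Implicit. Unset Printing Implicit Defensive.
Import Order.TTheory GRing.Theory Num.Theory.
Local Open Scope ring_scope.

(* The weights are a function of the sample, so no enlargement is needed.
   Round each X_j down to an integer bucket k and replace it by the cap
   u_k = min(k+1, Kn) >= X_j.  For the levels c_j = Kn / 2^j let J be the
   first level at which sum_i min(u_i, c_j) fits in the budget
   M = 128 K ln(1/eps) n (the level n always does), and put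
   W_i = min(1, c_J / u_i); then sum_i W_i X_i <= sum_i min(u_i, c_J) <= M.
   If J = j+1 then level j was over budget, so
     prod_i W_i^-1 = prod_i max(1, 2 u_i / c_j)
       <= exp((sum_i min(u_i, c_j) - M) / c_j) prod_i max(1, 2 u_i / c_j).
   By independence the expectation of the right-hand side factorizes as
   exp(-M/c_j) (E[exp(min(u, c_j)/c_j) max(1, 2u/c_j)])^n, and since E u <= 2
   this is at most exp((24 n - M) / c_j) <= eps 2^-(j+1); summing over j
   gives E prod_i W_i^-1 <= 1 + eps. *)

Section exponential_bounds.
Variable R : realType.

Lemma expR1_le4 : expR 1 <= 4 :> R.
Proof.
have half_ge := expR_ge1Dx (- (1/2) : R).
have expR1E : expR 1 = expR (1/2) * expR (1/2) :> R.
  by rewrite -expRD; congr expR; field.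
have expR_half_inv : expR (- (1/2)) * expR (1/2) = 1 :> R.
  by rewrite -expRD addNr expR0.
have := expR_gt0 (1/2 : R).
rewrite expR1E; nra.
Qed.

Lemma expR_le1DmulexpR (t : R) : expR t <= 1 + t * expR t.
Proof.
have := expR_ge1Dx (- t).
have : expR (- t) * expR t = 1 by rewrite -expRD addNr expR0.
have := expR_gt0 t.
nra.
Qed.

Definition moment_factor (c x : R) : R :=
  expR (Num.min x c / c) * Num.max 1 (2 * x / c).

Lemma moment_factor_ge0 c x : 0 <= moment_factor c x.
Proof. by rewrite mulr_ge0 ?expR_ge0 // le_max ler01. Qed.

Lemma moment_factor_le c x : 0 < c -> 0 <= x ->
  moment_factor c x <= 1 + 12 * x / c.
Proof.
move=> c_gt0 x_ge0; rewrite /moment_factor -!mulrA.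
set t := x / c.
have t_ge0 : 0 <= t by rewrite divr_ge0 // ltW.
have := expR1_le4.
have [x_le_c|c_lt_x] := leP x c.
  have t_le1 : t <= 1 by rewrite ler_pdivrMr // mul1r.
  have : expR t <= expR 1 by rewrite ler_expR.
  have := expR_le1DmulexpR t.
  have := expR_gt0 t.
  have max_le : Num.max 1 (2 * t) <= 1 + 2 * t by rewrite ge_max; lra.
  have : expR t * Num.max 1 (2 * t) <= expR t * (1 + 2 * t).
    by rewrite ler_wpM2l // expR_ge0.
  nra.
have t_gt1 : 1 < t by rewrite ltr_pdivlMr // mul1r.
rewrite divff ?gt_eqF // (max_idPr _); last lra.
have := expR_gt0 (1 : R); nra.
Qed.

Lemma sum_halfX_le1 m : \sum_(j < m) (1/2 : R) ^+ j.+1 <= 1.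
Proof.
have -> : \sum_(j < m) (1/2 : R) ^+ j.+1 = 1 - (1/2) ^+ m.
  elim: m => [|m IHm]; first by rewrite big_ord0 expr0 subrr.
  by rewrite big_ord_recr /= IHm exprS; field.
by rewrite lerBlDr lerDl exprn_ge0.
Qed.

End exponential_bounds.

Section truncation_weights.
Variables (R : realType) (I : finType) (n : nat) (K eps : R) (u : I -> R).
Hypotheses (n_gt0 : (0 < n)%N) (K_ge1 : 1 <= K).
Hypotheses (eps_gt0 : 0 < eps) (eps_lt_half : eps < 1/2).
Hypothesis u_range : forall k, 0 < u k <= K * n%:R.

Definition level (j : nat) : R := K * n%:R / 2 ^+ j.

Definition budget : R := 128 * K * ln eps^-1 * n%:R.

Definition truncated_sum (w : {ffun 'I_n -> I}) (j : nat) : R :=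
  \sum_i Num.min (u (w i)) (level j).

Definition stop_level (w : {ffun 'I_n -> I}) : nat :=
  find (fun j => truncated_sum w j <= budget) (iota 0 n.+1).

Definition weight (w : {ffun 'I_n -> I}) (i : 'I_n) : R :=
  Num.min 1 (level (stop_level w) / u (w i)).

Let K_gt0 : 0 < K. Proof. exact: lt_le_trans ltr01 K_ge1. Qed.
Let n_ltr0 : 0 < n%:R :> R. Proof. by rewrite ltr0n. Qed.
Let u_gt0 k : 0 < u k. Proof. by case/andP: (u_range k). Qed.

Lemma ln_invf_gt_half : 1/2 < ln eps^-1.
Proof.
have : expR (- ln eps^-1) = eps by rewrite lnV ?posrE // opprK lnK.
have := expR_ge1Dx (- ln eps^-1).
have := eps_lt_half; lra.
Qed.

Lemma level_gt0 j : 0 < level j.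
Proof. by rewrite divr_gt0 ?exprn_gt0 ?mulr_gt0. Qed.

Lemma levelS j : level j.+1 = level j / 2.
Proof. by rewrite /level exprS; field; rewrite expf_neq0. Qed.

Lemma truncated_sum_le_budget w : truncated_sum w n <= budget.
Proof.
apply: (le_trans (_ : _ <= \sum_(i < n) level n)).
  by apply: ler_sum => i _; rewrite ge_min lexx orbT.
rewrite sumr_const card_ord -mulr_natr /level /budget.
have n_le_2X : n%:R <= 2 ^+ n :> R by rewrite -natrX ler_nat ltnW // ltn_expl.
have : n%:R / 2 ^+ n <= 1 :> R by rewrite ler_pdivrMr ?exprn_gt0 // mul1r.
have := ln_invf_gt_half.
have : 0 <= n%:R / 2 ^+ n :> R by rewrite divr_ge0 ?exprn_ge0.
have -> : K * n%:R / 2 ^+ n * n%:R = K * n%:R * (n%:R / 2 ^+ n) by ring.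
have := mulr_gt0 K_gt0 n_ltr0.
nra.
Qed.

Lemma has_truncated_sum_le_budget w :
  has (fun j => truncated_sum w j <= budget) (iota 0 n.+1).
Proof.
apply/hasP; exists n; last exact: truncated_sum_le_budget.
by rewrite mem_iota add0n ltnSn.
Qed.

Lemma stop_level_le w : (stop_level w <= n)%N.
Proof.
by rewrite -ltnS -[n.+1](size_iota 0) -has_find has_truncated_sum_le_budget.
Qed.

Lemma truncated_sum_stop_level w : truncated_sum w (stop_level w) <= budget.
Proof.
have := nth_find 0 (has_truncated_sum_le_budget w).
by rewrite nth_iota ?add0n // ltnS stop_level_le.
Qed.

Lemma budget_lt_truncated_sum w j : (j < stop_level w)%N ->
  budget < truncated_sum w j.
Proof.
move=> j_lt; have := before_find 0 j_lt.
rewrite nth_iota ?add0n; last exact: leq_trans j_lt (leqW (stop_level_le w)).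
by move/negbT; rewrite -ltNge.
Qed.

Lemma weight_gt0 w i : 0 < weight w i.
Proof. by rewrite lt_min ltr01 divr_gt0 ?level_gt0. Qed.

Lemma weight_le1 w i : weight w i <= 1.
Proof. by rewrite ge_min lexx. Qed.

Lemma weightV w i :
  (weight w i)^-1 = Num.max 1 (u (w i) / level (stop_level w)).
Proof.
rewrite /weight -[u (w i) / _]invf_div.
have : 0 < level (stop_level w) / u (w i) by rewrite divr_gt0 ?level_gt0.
set a := level _ / _ => a_gt0.
have [a_le1|a_gt1] := leP a 1; first by rewrite (max_idPr _) // invf_ge1.
by rewrite invr1 (max_idPl _) // invf_le1 // ltW.
Qed.

Lemma weight_mul w i :
  weight w i * u (w i) = Num.min (u (w i)) (level (stop_level w)).
Proof.
have := level_gt0 (stop_level w); set c := level _ => c_gt0.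
have u_gt0' := u_gt0 (w i).
rewrite /weight -/c.
have [u_le_c|c_lt_u] := leP (u (w i)) c.
  by rewrite (min_idPl _) ?mul1r // ler_pdivlMr // mul1r.
by rewrite (min_idPr _) ?mulfVK ?gt_eqF // ler_pdivrMr // mul1r ltW.
Qed.

Lemma sum_weight_mul_le_budget w : \sum_i weight w i * u (w i) <= budget.
Proof.
under eq_bigr do rewrite weight_mul.
exact: truncated_sum_stop_level.
Qed.

Definition moment_bound (j : nat) (w : {ffun 'I_n -> I}) : R :=
  expR ((truncated_sum w j - budget) / level j) *
  \prod_i Num.max 1 (2 * u (w i) / level j).

Lemma moment_bound_ge0 j w : 0 <= moment_bound j w.
Proof.
by rewrite mulr_ge0 ?expR_ge0 // prodr_ge0 // => i _; rewrite le_max ler01.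
Qed.

(* If the algorithm stops at level [j.+1], then level [j] was over budget,
   so the exponential factor of [moment_bound j] is at least [1]. *)
Lemma prod_weightV_le w :
  (\prod_i weight w i)^-1 <= 1 + \sum_(j < n) moment_bound j w.
Proof.
rewrite -prodfV; under eq_bigr do rewrite weightV.
have := stop_level_le w; have := @budget_lt_truncated_sum w.
case: (stop_level w) => [|j] over_budget j_lt.
  rewrite big1 ?lerDl ?sumr_ge0 // => [j _|i _]; first exact: moment_bound_ge0.
  apply/max_idPl; rewrite ler_pdivrMr ?level_gt0 // /level expr0 divr1 mul1r.
  by case/andP: (u_range (w i)).
have c_gt0 := level_gt0 j.
have -> : \prod_i Num.max 1 (u (w i) / level j.+1) =
          \prod_i Num.max 1 (2 * u (w i) / level j).
  by apply: eq_bigr => i _; rewrite levelS; congr Num.max; field; rewrite gt_eqF.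
apply: (le_trans (_ : _ <= moment_bound (Ordinal j_lt) w)).
  rewrite ler_peMl //; first by apply: prodr_ge0 => i _; rewrite le_max ler01.
  apply: le_trans (expR_ge1Dx _).
  by rewrite lerDl divr_ge0 ?ltW // subr_gt0 over_budget.
rewrite (bigD1 (Ordinal j_lt)) //= addrCA lerDl addr_ge0 ?sumr_ge0 //.
by move=> k _; exact: moment_bound_ge0.
Qed.

Lemma moment_boundE j w : moment_bound j w =
  expR (- (budget / level j)) * \prod_i moment_factor (level j) (u (w i)).
Proof.
rewrite /moment_bound /truncated_sum mulrBl mulr_suml addrC expRD expR_sum.
by rewrite -mulrA -big_split.
Qed.

(* Since [budget / level j = 128 ln(1/eps) 2^j] grows with [j], the
   exponential beats the [24 n / level j] lost to the moment factors. *)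
Lemma expR_budget_le j : (j < n)%N ->
  expR (- (budget / level j) + n%:R * (24 / level j)) <= eps * (1/2) ^+ j.+1.
Proof.
move=> j_lt_n.
have L_gt := ln_invf_gt_half.
set q : R := 2 ^+ j.
have q_gt0 : 0 < q by rewrite exprn_gt0.
have jq : (j.+2)%:R <= 2 * q by rewrite /q -exprS -natrX ler_nat ltn_expl.
have budgetE : budget / level j = 128 * ln eps^-1 * q.
  by rewrite /budget /level -/q; field; rewrite !gt_eqF.
have lossE : n%:R * (24 / level j) = 24 * q / K.
  by rewrite /level -/q; field; rewrite !gt_eqF.
have loss_le : 24 * q / K <= 24 * q by rewrite ler_pdivrMr //; have := K_ge1; nra.
have lnE : ln eps = - ln eps^-1 by rewrite lnV ?posrE // opprK.
apply: (le_trans (_ : _ <= expR ((j.+2)%:R * ln eps))).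
  rewrite ler_expR budgetE lossE lnE.
  have : (j.+2)%:R * ln eps^-1 <= 2 * q * ln eps^-1 by rewrite ler_wpM2r //; lra.
  have : 0 < q * ln eps^-1 by rewrite mulr_gt0 //; lra.
  nra.
rewrite expRM_natl lnK ?posrE // exprS ler_pM2l // lerXn2r ?nnegrE ?ltW //.
Qed.

Section expectation.
Variable p : I -> R.
Hypotheses (p_ge0 : forall k, 0 <= p k) (sum_p : \sum_k p k = 1).
Hypothesis sum_pu_le2 : \sum_k p k * u k <= 2.

Lemma sum_moment_factor_le j :
  \sum_k moment_factor (level j) (u k) * p k <= 1 + 24 / level j.
Proof.
have c_gt0 := level_gt0 j.
apply: (le_trans (_ : _ <= \sum_k (p k + 12 / level j * (p k * u k)))).
  apply: ler_sum => k _.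
  have -> : p k + 12 / level j * (p k * u k) = (1 + 12 * u k / level j) * p k.
    by field; rewrite gt_eqF.
  by rewrite ler_wpM2r // moment_factor_le // ltW.
rewrite big_split /= -mulr_sumr.
have : 12 / level j * \sum_k p k * u k <= 12 / level j * 2.
  by rewrite ler_wpM2l // divr_ge0 // ltW.
have : 12 / level j * 2 = 24 / level j by rewrite mulrAC; congr (_ / _); lra.
by rewrite sum_p; lra.
Qed.

Lemma expected_moment_bound_le j : (j < n)%N ->
  \sum_w moment_bound j w * \prod_i p (w i) <= eps * (1/2) ^+ j.+1.
Proof.
move=> j_lt_n.
under eq_bigr do rewrite moment_boundE -mulrA -big_split /=.
rewrite -mulr_sumr.
rewrite -(bigA_distr_bigA (fun _ k => moment_factor (level j) (u k) * p k)) /=.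
rewrite prodr_const card_ord.
apply: le_trans (expR_budget_le j_lt_n); rewrite expRD ler_wpM2l ?expR_ge0 //.
rewrite expRM_natl lerXn2r ?nnegrE ?expR_ge0 //.
  by apply: sumr_ge0 => k _; rewrite mulr_ge0 ?moment_factor_ge0.
apply: le_trans (sum_moment_factor_le j) _.
by have := expR_ge1Dx (24 / level j); lra.
Qed.

Lemma expected_prod_weightV_le :
  \sum_w (\prod_i weight w i)^-1 * \prod_i p (w i) <= 1 + eps.
Proof.
have pw_ge0 w : 0 <= \prod_i p (w i) by apply: prodr_ge0.
apply: (le_trans (_ : _ <=
  \sum_w (1 + \sum_(j < n) moment_bound j w) * \prod_i p (w i))).
  by apply: ler_sum => w _; rewrite ler_wpM2r // prod_weightV_le.
under eq_bigr do rewrite mulrDl mul1r mulr_suml.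
rewrite big_split /= exchange_big /= lerD //.
  by rewrite -(bigA_distr_bigA (fun _ k => p k)) /= prodr_const sum_p expr1n.
apply: (le_trans (_ : _ <= \sum_(j < n) eps * (1/2) ^+ j.+1)).
  by apply: ler_sum => j _; exact: expected_moment_bound_le.
by rewrite -mulr_sumr ler_piMr ?sum_halfX_le1 // ltW.
Qed.

Lemma expected_prod_weightV_ge1 :
  1 <= \sum_w (\prod_i weight w i)^-1 * \prod_i p (w i).
Proof.
apply: (le_trans (_ : 1 <= \sum_(w : {ffun 'I_n -> I}) \prod_i p (w i))).
  by rewrite -(bigA_distr_bigA (fun _ k => p k)) /= sum_p big1.
apply: ler_sum => w _; rewrite ler_peMl ?prodr_ge0 // invf_ge1 ?prodr_gt0 //.
  by rewrite prodr_ile1 // => i _; rewrite weight_le1 ltW // weight_gt0.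
by move=> i _; exact: weight_gt0.
Qed.

End expectation.
End truncation_weights.

Local Open Scope classical_set_scope.

Section finite_valued.
Context d (T : measurableType d) (R : realType).
Variables (I : finType) (f : T -> I).
Hypothesis f_meas : forall i, measurable (f @^-1` [set i]).

Lemma finite_valuedE (G : I -> R) x :
  G (f x) = \sum_i G i * \1_(f @^-1` [set i]) x.
Proof.
rewrite (bigD1 (f x)) //= indicE mem_set // mulr1 big1 ?addr0 // => i /negPf fx_neq.
by rewrite indicE memNset ?mulr0 //= => fxE; rewrite fxE eqxx in fx_neq.
Qed.

Lemma measurable_scaled_indic (G : I -> R) i :
  measurable_fun setT (fun x => G i * \1_(f @^-1` [set i]) x).
Proof.
apply: measurable_funM; first exact: measurable_cst.
exact: measurable_indic.
Qed.

Lemma measurable_fun_finite_valued (G : I -> R) :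
  measurable_fun setT (fun x => G (f x)).
Proof.
rewrite (_ : (fun x => _) = fun x => \sum_i G i * \1_(f @^-1` [set i]) x).
  by apply: measurable_sum => i; exact: measurable_scaled_indic.
by apply/funext => x; rewrite finite_valuedE.
Qed.

Lemma integral_finite_valued (mu : {measure set T -> \bar R}) (G : I -> R) :
  (forall i, 0 <= G i) ->
  (\int[mu]_x (G (f x))%:E = \sum_i (G i)%:E * mu (f @^-1` [set i]))%E.
Proof.
move=> G_ge0; under eq_integral do rewrite finite_valuedE -sumEFin.
rewrite ge0_integral_sum //; last 2 first.
- by move=> i; apply/measurable_EFinP; exact: measurable_scaled_indic.
- by move=> i x _; rewrite lee_fin mulr_ge0.
apply: eq_bigr => i _.
rewrite (integralZl_indic _ (fun _ => f @^-1` [set i])) //.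
  by rewrite integral_indic // setIT.
by move=> /lt_geF; rewrite G_ge0.
Qed.

End finite_valued.

Section bucket.
Variables (R : realType) (m : nat).

(* Integer part, clamped to [0, m]; negative reals land in bucket [0]. *)
Definition bucket (r : R) : 'I_m.+1 := inord (minn (Num.truncn r) m).

Lemma bucket_val r : val (bucket r) = minn (Num.truncn r) m.
Proof. by rewrite /bucket /= inordK // ltnS geq_minr. Qed.

Lemma measurable_truncn_ge k : measurable [set r : R | (k <= Num.truncn r)%N].
Proof.
case: k => [|k]; first by rewrite (_ : [set _ | _] = setT) //; apply/seteqP.
rewrite (_ : [set _ | _] = `[k.+1%:R, +oo[%classic); first exact: measurable_itv.
by apply/seteqP; split => r /=; rewrite in_itv /= andbT truncn_gt_nat.
Qed.

Lemma measurable_bucket k : measurable (bucket @^-1` [set k]).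
Proof.
have [k_lt_m|m_le_k] := ltnP k m.
  rewrite (_ : _ @^-1` _ = [set r | (k <= Num.truncn r)%N] `\`
                           [set r | (k.+1 <= Num.truncn r)%N]).
    by apply: measurableD; exact: measurable_truncn_ge.
  apply/seteqP; split => r /=.
    move=> kE; rewrite -kE bucket_val in k_lt_m *; split; first exact: geq_minl.
    by apply/negP; case: (leqP (Num.truncn r) m) k_lt_m => _; rewrite ltnn.
  move=> [k_le /negP]; rewrite -leqNgt => t_le_k.
  have tE : Num.truncn r = k by apply/anti_leq; rewrite t_le_k.
  by apply: val_inj; rewrite /= bucket_val tE (minn_idPl (ltnW k_lt_m)).
have kE : val k = m by apply/anti_leq; rewrite -ltnS ltn_ord.
rewrite (_ : _ @^-1` _ = [set r | (m <= Num.truncn r)%N]).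
  exact: measurable_truncn_ge.
apply/seteqP; split => r /=.
  by move=> /(congr1 val); rewrite bucket_val kE => <-; exact: geq_minl.
by move=> m_le; apply: val_inj; rewrite /= bucket_val kE; apply/minn_idPr.
Qed.

Lemma bucket_le r : (val (bucket r))%:R <= Num.max r 0.
Proof.
rewrite bucket_val; apply: le_trans (_ : (Num.truncn r)%:R <= _).
  by rewrite ler_nat geq_minl.
have [r_ge0|r_lt0] := leP 0 r; first by rewrite truncn_le.
by rewrite truncn_floor ifF //; apply/negbTE; rewrite -ltNge.
Qed.

End bucket.

Lemma le_bucket_cap (R : realType) (a r : R) : 0 <= r <= a ->
  r <= Num.min (val (bucket (Num.truncn a) r)).+1%:R a.
Proof.
move=> /andP[r_ge0 r_le_a]; rewrite le_min r_le_a andbT bucket_val.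
case: leqP => _; last exact: le_trans r_le_a (ltW (truncnS_gt a)).
exact: ltW (truncnS_gt r).
Qed.

Section iid_truncation.
Context d (T : measurableType d) (R : realType) (P : probability T R).
Variables (n : nat) (K eps : R) (X : 'I_n -> T -> R).
Hypotheses (n_gt0 : (0 < n)%N) (K_ge1 : 1 <= K).
Hypotheses (eps_gt0 : 0 < eps) (eps_lt_half : eps < 1/2).
Hypothesis X_iid : iid P X.
Hypothesis X_range : forall j, {ae P, forall x, 0 <= X j x <= K * n%:R}.
Hypothesis X_mean : forall j, (\int[P]_x (X j x)%:E <= 1)%E.

Let m := Num.truncn (K * n%:R).

Definition bucket_cap (k : 'I_m.+1) : R := Num.min (val k).+1%:R (K * n%:R).

Definition bucket_profile (x : T) : {ffun 'I_n -> 'I_m.+1} :=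
  [ffun i => bucket m (X i x)].

Definition truncation_weight (i : 'I_n) (x : T) : R :=
  weight K eps bucket_cap (bucket_profile x) i.

Local Notation W := truncation_weight.

Let X_meas : forall j, measurable_fun setT (X j). Proof. by case: X_iid => -[]. Qed.

Lemma bucket_cap_range k : 0 < bucket_cap k <= K * n%:R.
Proof.
have : 0 < K * n%:R by rewrite mulr_gt0 ?ltr0n // (lt_le_trans ltr01).
by rewrite ge_min lexx orbT andbT lt_min ltr0n.
Qed.

Lemma measurable_bucket_X j k : measurable (X j @^-1` (bucket m @^-1` [set k])).
Proof. by have := X_meas j measurableT (measurable_bucket k); rewrite setTI. Qed.

Lemma bucket_profile_preimage w : bucket_profile @^-1` [set w] =
  \bigcap_(i in [set: 'I_n]) X i @^-1` (bucket m @^-1` [set w i]).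
Proof.
apply/seteqP; split => x /=; first by move=> <- i _ /=; rewrite ffunE.
by move=> bx; apply/ffunP => i; rewrite ffunE; exact: bx.
Qed.

Lemma measurable_bucket_profile w : measurable (bucket_profile @^-1` [set w]).
Proof.
rewrite bucket_profile_preimage.
by apply: fin_bigcap_measurable => // i _; exact: measurable_bucket_X.
Qed.

Lemma probability_bucket_profile w : P (bucket_profile @^-1` [set w]) =
  (\prod_j P (X j @^-1` (bucket m @^-1` [set w j])))%E.
Proof.
case: X_iid => -[_ X_indep] _.
by rewrite bucket_profile_preimage X_indep // => j; exact: measurable_bucket.
Qed.

Lemma measurable_truncation_weight i : measurable_fun setT (W i).
Proof.
exact: measurable_fun_finite_valued measurable_bucket_profile
  (fun w => weight K eps bucket_cap w i).
Qed.

Lemma truncation_weight_ge0_le1 i x : 0 <= W i x <= 1.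
Proof.
by rewrite weight_le1 andbT ltW // (weight_gt0 _ n_gt0 K_ge1 bucket_cap_range).
Qed.

Lemma ae_sum_truncation_weight_le :
  {ae P, forall x, \sum_j W j x * X j x <= budget n K eps}.
Proof.
apply: filterS (filter_forall (ae_filter_ringOfSetsType P) X_range) => x X_range_x.
apply: le_trans (sum_weight_mul_le_budget n_gt0 K_ge1 eps_gt0 eps_lt_half
  bucket_cap_range (bucket_profile x)).
apply: ler_sum => j _; rewrite ler_wpM2l ?ffunE ?le_bucket_cap //.
by case/andP: (truncation_weight_ge0_le1 j x).
Qed.

Lemma inv_prod_truncation_weight x :
  inv_prod W x = ((\prod_i weight K eps bucket_cap (bucket_profile x) i)^-1)%:E.
Proof.
rewrite /inv_prod gt_eqF // prodr_gt0 // => i _.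
exact: (weight_gt0 _ n_gt0 K_ge1 bucket_cap_range).
Qed.

Let i0 : 'I_n := Ordinal n_gt0.

Definition bucket_law (k : 'I_m.+1) : R :=
  fine (P (X i0 @^-1` (bucket m @^-1` [set k]))).

Lemma probability_bucket_X j k :
  P (X j @^-1` (bucket m @^-1` [set k])) = (bucket_law k)%:E.
Proof.
case: X_iid => _ X_ident.
rewrite (X_ident j i0 _ (measurable_bucket k)) fineK // ge0_fin_numE ?measure_ge0 //.
exact: le_lt_trans (probability_le1 _ (measurable_bucket_X i0 k)) (ltry _).
Qed.

Lemma bucket_law_ge0 k : 0 <= bucket_law k.
Proof. by rewrite fine_ge0 // measure_ge0. Qed.

Lemma integral_bucket (G : 'I_m.+1 -> R) : (forall k, 0 <= G k) ->
  (\int[P]_x (G (bucket m (X i0 x)))%:E = (\sum_k G k * bucket_law k)%:E)%E.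
Proof.
move=> G_ge0.
rewrite (integral_finite_valued (f := fun x => bucket m (X i0 x))) //.
  rewrite -sumEFin; apply: eq_bigr => k _; rewrite EFinM; congr (_ * _)%E.
  exact: probability_bucket_X.
exact: measurable_bucket_X.
Qed.

Lemma sum_bucket_law : \sum_k bucket_law k = 1.
Proof.
have : (\int[P]_x ((fun _ => 1) (bucket m (X i0 x)))%:E = 1)%E.
  by rewrite integral_cst // mul1e; exact: probability_setT.
rewrite (@integral_bucket (fun _ => 1)) // => /eqP; rewrite eqe => /eqP <-.
by apply: eq_bigr => k _; rewrite mul1r.
Qed.

(* Since [bucket] rounds down, this is the first-moment hypothesis. *)
Lemma sum_bucket_law_index_le1 : \sum_k (val k)%:R * bucket_law k <= 1.
Proof.
rewrite -lee_fin -integral_bucket; last by move=> k; exact: ler0n.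
apply: le_trans (X_mean i0).
have meas_max : measurable_fun setT (fun x => (Num.max (X i0 x) 0)%:E).
  by apply/measurable_EFinP; apply: measurable_maxr => //; exact: measurable_cst.
have -> : (\int[P]_x (X i0 x)%:E = \int[P]_x (Num.max (X i0 x) 0)%:E)%E.
  apply: ae_eq_integral => //; first exact/measurable_EFinP.
  apply: filterS (X_range i0) => x /andP[X_ge0 _] _.
  by rewrite (max_idPl X_ge0).
apply: ge0_le_integral => //.
- apply/measurable_EFinP.
  exact: (measurable_fun_finite_valued (measurable_bucket_X i0) (fun k => (val k)%:R)).
- by move=> x _; rewrite lee_fin bucket_le.
Qed.

Lemma sum_bucket_law_cap_le2 : \sum_k bucket_law k * bucket_cap k <= 2.
Proof.
apply: le_trans (_ : \sum_k ((val k)%:R * bucket_law k + bucket_law k) <= 2).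
  apply: ler_sum => k _; rewrite mulrC -[X in _ + X]mul1r -mulrDl.
  by rewrite ler_wpM2r ?bucket_law_ge0 // ge_min natr1 lexx.
by rewrite big_split /= sum_bucket_law lerD2r sum_bucket_law_index_le1.
Qed.

Lemma integral_inv_prod_truncation_weightE : (\int[P]_x inv_prod W x =
  (\sum_(w : {ffun 'I_n -> 'I_m.+1})
     (\prod_i weight K eps bucket_cap w i)^-1 * \prod_i bucket_law (w i))%:E)%E.
Proof.
under eq_integral do rewrite inv_prod_truncation_weight.
rewrite (@integral_finite_valued _ _ _ _ _ measurable_bucket_profile P
  (fun w => (\prod_i weight K eps bucket_cap w i)^-1)); last first.
  move=> w; rewrite invr_ge0 prodr_ge0 // => i _.
  exact: ltW (weight_gt0 _ n_gt0 K_ge1 bucket_cap_range _ _).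
rewrite -sumEFin; apply: eq_bigr => w _.
rewrite EFinM -prodEFin; congr (_ * _)%E.
apply: etrans (probability_bucket_profile w) _.
by apply: eq_bigr => j _; exact: probability_bucket_X.
Qed.

Lemma integral_inv_prod_truncation_weight :
  (1 <= \int[P]_x inv_prod W x <= 1 + eps%:E)%E.
Proof.
rewrite integral_inv_prod_truncation_weightE -EFinD !lee_fin.
rewrite (expected_prod_weightV_ge1 eps n_gt0 K_ge1 bucket_cap_range
  bucket_law_ge0 sum_bucket_law).
exact: (expected_prod_weightV_le n_gt0 K_ge1 eps_gt0 eps_lt_half bucket_cap_range
  bucket_law_ge0 sum_bucket_law sum_bucket_law_cap_le2).
Qed.

End iid_truncation.

Theorem mainTheorem4 (R : realType) :
  exists C : R, 0 < C /\
  forall (d : measure_display) (T : measurableType d) (P : probability T R)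
    (n : nat) (K : R) (X : 'I_n -> T -> R) (eps : R),
    (1 <= n)%N -> 1 <= K ->
    iid P X ->
    (forall j, {ae P, forall x, 0 <= X j x <= K * n%:R}) ->
    (forall j, (\int[P]_x (X j x)%:E <= 1)%E) ->
    0 < eps < 1 / 2 ->
    exists (d' : measure_display) (T' : measurableType d')
      (P' : probability T' R) (X' : 'I_n -> T' -> R) (W : 'I_n -> T' -> R),
      (* (X'_j) is a copy of (X_j) on the enlarged space *)
      iid P' X' /\
      (forall j (B : set R), measurable B -> P' (X' j @^-1` B) = P (X j @^-1` B)) /\
      (forall j, measurable_fun setT (W j)) /\
      (forall j x, 0 <= W j x <= 1) /\
      {ae P', forall x,
         \sum_(j < n) W j x * X' j x <= C * K * ln (eps^-1) * n%:R} /\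
      (1 <= \int[P']_x inv_prod W x <= 1 + eps%:E)%E.
Proof.
exists 128; split => // d T P n K X eps n_gt0 K_ge1 X_iid X_range X_mean.
move=> /andP[eps_gt0 eps_lt_half].
exists d, T, P, X, (truncation_weight K eps X).
split; first exact: X_iid.
split; first by [].
split.
  by move=> j; apply: (measurable_truncation_weight K eps X_iid j).
split; first exact: truncation_weight_ge0_le1 eps X n_gt0 K_ge1.
split; first exact: ae_sum_truncation_weight_le n_gt0 K_ge1 eps_gt0 eps_lt_half X_range.
exact: integral_inv_prod_truncation_weight n_gt0 K_ge1 eps_gt0 eps_lt_half
  X_iid X_range X_mean.
Qed.
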